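(* Suppose that $\rho\ge2$, that $\rho=t-\Theta(1)$, and that $a=t+O(1)$ is a positive integer. Then $x_t(\rho)+a\,y_t(\rho)=\log(d_a)+O(1)$. (That is, for fixed constants bounding $t-\rho$ above and below by positive constants and bounding $|a-t|$, the difference $x_t(\rho)+ay_t(\rho)-\log d_a$ is bounded uniformly.)
   Context: $d_i=2^{\binom i2}i!$. For positive integer $t$ and real $1<\rho<t$, $x_t(\rho),y_t(\rho)$ are the unique reals $x,y$ with $\sum_{i=1}^t e^{x+iy}d_i^{-1}=1$ and $\sum_{i=1}^t ie^{x+iy}d_i^{-1}=\rho$. Logarithms are natural. *)

From Stdlib Require Import Reals Lra Lia Factorial.
Open Scope R_scope.

(* d_i = 2^(binom i 2) * i!   (binom i 2 = i(i-1)/2, exact integer division) *)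
Definition d (i : nat) : R :=
  INR (2 ^ (Nat.div (i * (i - 1)) 2) * Factorial.fact i)%nat.

Fixpoint sum1 (t : nat) (f : nat -> R) : R :=
  match t with
  | O => 0
  | S n => sum1 n f + f (S n)
  end.

(* (x, y) = (x_t(rho), y_t(rho)): the (unique) reals with
   sum_{i=1}^t e^{x+iy}/d_i = 1 and sum_{i=1}^t i e^{x+iy}/d_i = rho. *)
Definition is_xy (t : nat) (rho x y : R) : Prop :=
  sum1 t (fun i => exp (x + INR i * y) / d i) = 1 /\
  sum1 t (fun i => INR i * exp (x + INR i * y) / d i) = rho.

From Stdlib Require Import Reals Lra Lia Factorial.
Open Scope R_scope.

(* Reindex by [k = t - i]: the weights [w k = e^(x + (t-k) y) / d (t-k)] form a probability
   distribution on [0, t) with mean [t - rho], in [c1, c2], and consecutive ratios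
   [s k = w (k+1) / w k = 2^(t-1-k) (t-k) e^(-y)] decaying by factors between [1/4] and [1/2].
   For such a distribution with bounded mean, [s 0] and [w 0] are bounded above and below by
   constants depending only on [c1, c2].  Since [ln (w 0) = x + t y - ln (d t)] and
   [ln (s 0) = (t-1) ln 2 + ln t - y], this bounds the defect at [i = t], and each step
   [i -> i+1] changes [x + i y - ln (d i)] by [y - i ln 2 - ln (i+1)], which is [O(1)] for
   [|i - t| = O(1)]. *)

Lemma Rabs_le_inv a b : Rabs a <= b -> - b <= a <= b.
Proof.
  intros H. pose proof (Rle_abs a). pose proof (Rle_abs (- a)). rewrite Rabs_Ropp in *. lra.
Qed.

Lemma ln_le a b : 0 < a -> a <= b -> ln a <= ln b.
Proof.
  intros Ha [Hab|<-]; [left; apply ln_increasing; assumption | right; reflexivity].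
Qed.

Lemma Rabs_ln_between l u z : 0 < l -> l <= z <= u -> Rabs (ln z) <= Rabs (ln l) + Rabs (ln u).
Proof.
  intros Hl [Hlz Hzu]. pose proof (ln_le l z Hl Hlz). pose proof (ln_le z u ltac:(lra) Hzu).
  pose proof (Rle_abs (ln u)). pose proof (Rle_abs (- ln l)). rewrite Rabs_Ropp in *.
  pose proof (Rabs_pos (ln l)). pose proof (Rabs_pos (ln u)).
  apply Rabs_le. lra.
Qed.

Lemma ln_2_lt_1 : ln 2 < 1.
Proof.
  rewrite <- (ln_exp 1). apply ln_increasing; [lra|].
  pose proof (exp_ineq1 1 ltac:(lra)). lra.
Qed.

Lemma ln_sub_le a b : 1 <= b <= a -> ln a - ln b <= a - b.
Proof.
  intros [Hb Hba].
  assert (H : ln (a / b) <= a / b - 1).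
  { pose proof (exp_ineq1_le (ln (a / b))) as He.
    rewrite exp_ln in He by (apply Rdiv_lt_0_compat; lra). lra. }
  unfold Rdiv in H. rewrite ln_mult, ln_Rinv in H by (try apply Rinv_0_lt_compat; lra).
  assert (a * / b - 1 <= a - b).
  { apply Rmult_le_reg_r with b; [lra|]. field_simplify; [nra | lra]. }
  lra.
Qed.

Lemma Rabs_ln_sub_le a b : 1 <= a -> 1 <= b -> Rabs (ln a - ln b) <= Rabs (a - b).
Proof.
  intros Ha Hb. destruct (Rle_dec b a) as [Hba|Hab].
  - pose proof (ln_sub_le a b ltac:(lra)). pose proof (ln_le b a ltac:(lra) Hba).
    rewrite !Rabs_right by lra. lra.
  - pose proof (ln_sub_le b a ltac:(lra)). pose proof (ln_le a b ltac:(lra) ltac:(lra)).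
    rewrite !Rabs_left1 by lra. lra.
Qed.

Fixpoint sum0 (n : nat) (f : nat -> R) : R :=
  match n with O => 0 | S n => sum0 n f + f n end.

Definition mean (n : nat) (Q : nat -> R) : R := sum0 n (fun k => INR k * Q k).

Lemma sum0_ext n f g :
  (forall k, (k < n)%nat -> f k = g k) -> sum0 n f = sum0 n g.
Proof.
  induction n as [|n IH]; intros H; simpl; [reflexivity|].
  rewrite IH by (intros; apply H; lia). rewrite H by lia. reflexivity.
Qed.

Lemma sum0_le n f g :
  (forall k, (k < n)%nat -> f k <= g k) -> sum0 n f <= sum0 n g.
Proof.
  induction n as [|n IH]; intros H; simpl; [lra|].
  assert (sum0 n f <= sum0 n g) by (apply IH; intros; apply H; lia).
  assert (f n <= g n) by (apply H; lia).
  lra.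
Qed.

Lemma sum0_scal n c f : sum0 n (fun k => c * f k) = c * sum0 n f.
Proof. induction n as [|n IH]; simpl; [ring|]. rewrite IH; ring. Qed.

Lemma sum0_minus n f g : sum0 n (fun k => f k - g k) = sum0 n f - sum0 n g.
Proof. induction n as [|n IH]; simpl; [ring|]. rewrite IH; ring. Qed.

Lemma sum0_const n c : sum0 n (fun _ => c) = INR n * c.
Proof. induction n as [|n IH]; simpl sum0; [simpl; ring|]. rewrite IH, S_INR; ring. Qed.

Lemma sum0_nonneg n f : (forall k, 0 <= f k) -> 0 <= sum0 n f.
Proof. intros H. induction n as [|n IH]; simpl; [lra|]. specialize (H n). lra. Qed.

Lemma sum0_le_prefix m n f :
  (m <= n)%nat -> (forall k, 0 <= f k) -> sum0 m f <= sum0 n f.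
Proof. intros Hmn H. induction Hmn as [|n _ IH]; simpl; [lra|]. specialize (H n). lra. Qed.

Lemma sum0_term_le k n f : (k < n)%nat -> (forall k, 0 <= f k) -> f k <= sum0 n f.
Proof.
  intros Hk H. apply Rle_trans with (sum0 (S k) f).
  - simpl. pose proof (sum0_nonneg k f H). lra.
  - apply sum0_le_prefix; assumption.
Qed.

Lemma sum1_rev t f : sum1 t f = sum0 t (fun k => f (t - k)%nat).
Proof.
  induction t as [|t IH]; [reflexivity|].
  assert (Hshift : forall n h, sum0 (S n) h = h 0%nat + sum0 n (fun k => h (S k))).
  { intros n h. induction n as [|n IHn]; simpl in *; [ring|]. rewrite IHn. ring. }
  rewrite Hshift. simpl sum1. rewrite IH. replace (S t - 0)%nat with (S t) by lia.
  rewrite Rplus_comm. reflexivity.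
Qed.

Lemma sum0_k_half_pow_le n : sum0 n (fun k => INR k * (/2) ^ k) <= 2.
Proof.
  assert (E : sum0 n (fun k => INR k * (/2) ^ k) + INR (n + 1) * 2 * (/2) ^ n = 2).
  { induction n as [|n IH]; [simpl; field|]. simpl sum0.
    replace (S n + 1)%nat with (S (S n)) by lia.
    rewrite plus_INR in IH. rewrite !S_INR. simpl INR in IH. simpl pow. lra. }
  assert (0 <= INR (n + 1) * 2 * (/2) ^ n).
  { pose proof (pos_INR (n + 1)). assert (0 < (/2) ^ n) by (apply pow_lt; lra). nra. }
  lra.
Qed.

Lemma markov_sum0 m n Q : (m <= n)%nat -> (forall k, 0 <= Q k) ->
  INR m * (sum0 n Q - sum0 m Q) <= mean n Q.
Proof.
  unfold mean. intros Hmn H. induction Hmn as [|n Hmn IH].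
  - rewrite Rminus_diag, Rmult_0_r. apply sum0_nonneg. intros k.
    apply Rmult_le_pos; [apply pos_INR | apply H].
  - simpl. assert (INR m <= INR n) by (apply le_INR; assumption).
    specialize (H n). nra.
Qed.

Lemma sum0_le_of_growth Q lam p : 2 <= lam -> (forall k, 0 <= Q k) ->
  (forall k, (k < p)%nat -> lam * Q k <= Q (S k)) -> sum0 p Q <= 2 * Q p / lam.
Proof.
  intros Hlam HQ Hgrow. induction p as [|p IH]; simpl.
  - specialize (HQ 0%nat). unfold Rdiv. apply Rmult_le_pos; [lra|].
    apply Rlt_le, Rinv_0_lt_compat; lra.
  - assert (IHp := IH (fun k Hk => Hgrow k ltac:(lia))). specialize (Hgrow p ltac:(lia)).
    pose proof (HQ p). apply Rmult_le_reg_r with lam; [lra|].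
    unfold Rdiv in *. rewrite Rmult_assoc, Rinv_l by lra.
    assert (sum0 p Q * lam <= 2 * Q p)
      by (apply Rmult_le_reg_r with (/ lam);
          [apply Rinv_0_lt_compat; lra | rewrite Rmult_assoc, Rinv_r by lra; lra]).
    nra.
Qed.

Lemma Rabs_sub_le_steps (g : nat -> R) (B : R) (a b : nat) : (a <= b)%nat ->
  (forall j, (a <= j < b)%nat -> Rabs (g (S j) - g j) <= B) ->
  Rabs (g b - g a) <= INR (b - a) * B.
Proof.
  intros Hab Hstep. induction Hab as [|b Hab IH].
  - rewrite Rminus_diag, Rabs_R0, Nat.sub_diag. simpl. lra.
  - rewrite Nat.sub_succ_l, S_INR by assumption.
    specialize (IH (fun j Hj => Hstep j ltac:(lia))). specialize (Hstep b ltac:(lia)).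
    pose proof (Rabs_triang (g (S b) - g b) (g b - g a)).
    replace (g (S b) - g b + (g b - g a)) with (g (S b) - g a) in * by ring.
    lra.
Qed.

Record decaying_weights (n : nat) (Q s : nat -> R) : Prop := {
  dw_pos : forall k, 0 < Q k;
  dw_sum : sum0 n Q = 1;
  dw_succ : forall k, (S k < n)%nat -> Q (S k) = Q k * s k;
  dw_ratio_pos : forall k, (k < n)%nat -> 0 < s k;
  dw_ratio_hi : forall k, (S k < n)%nat -> s (S k) <= s k / 2;
  dw_ratio_lo : forall k, (S k < n)%nat -> s k / 4 <= s (S k) }.

Arguments dw_pos {n Q s}.
Arguments dw_sum {n Q s}.
Arguments dw_succ {n Q s}.
Arguments dw_ratio_pos {n Q s}.
Arguments dw_ratio_hi {n Q s}.
Arguments dw_ratio_lo {n Q s}.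

Section decaying_weights.

Context {n : nat} {Q s : nat -> R} (HQs : decaying_weights n Q s).

Lemma dw_nonneg k : 0 <= Q k.
Proof. apply Rlt_le, HQs.(dw_pos). Qed.

Lemma dw_size_pos : (0 < n)%nat.
Proof. pose proof HQs.(dw_sum) as Hsum. destruct n; [simpl in Hsum; lra | lia]. Qed.

Lemma dw_le_1 k : (k < n)%nat -> Q k <= 1.
Proof. intros Hk. rewrite <- HQs.(dw_sum). apply sum0_term_le; [assumption | exact dw_nonneg]. Qed.

Lemma dw_mean_nonneg : 0 <= mean n Q.
Proof. apply sum0_nonneg. intros k. apply Rmult_le_pos; [apply pos_INR | apply dw_nonneg]. Qed.

Lemma dw_ratio_le_half_pow k : (k < n)%nat -> s k <= s 0%nat * (/2) ^ k.
Proof.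
  induction k as [|k IH]; intros Hk; simpl; [lra|].
  specialize (IH ltac:(lia)). pose proof (HQs.(dw_ratio_hi) k Hk). lra.
Qed.

Lemma dw_ratio_le_ratio0 k : (k < n)%nat -> s k <= s 0%nat.
Proof.
  intros Hk. pose proof (dw_ratio_le_half_pow k Hk). pose proof (HQs.(dw_ratio_pos) 0 dw_size_pos).
  assert ((/2) ^ k <= 1) by (rewrite <- (pow1 k); apply pow_incr; lra). nra.
Qed.

Lemma dw_ratio0_le_quarter_pow k : (k < n)%nat -> s 0%nat <= s k * 4 ^ k.
Proof.
  induction k as [|k IH]; intros Hk; simpl; [lra|].
  specialize (IH ltac:(lia)). pose proof (HQs.(dw_ratio_lo) k Hk).
  assert (0 < 4 ^ k) by (apply pow_lt; lra). nra.
Qed.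

Lemma dw_le_pow_ratio0 k : (k < n)%nat -> Q k <= Q 0%nat * s 0%nat ^ k.
Proof.
  induction k as [|k IH]; intros Hk; simpl; [lra|].
  specialize (IH ltac:(lia)). rewrite HQs.(dw_succ) by assumption.
  pose proof (dw_ratio_le_ratio0 k ltac:(lia)). pose proof (HQs.(dw_ratio_pos) k ltac:(lia)).
  pose proof (HQs.(dw_pos) k). nra.
Qed.

Lemma dw_mean_le_ratio0 : s 0%nat <= /2 -> mean n Q <= 4 * s 0%nat.
Proof.
  intros Hs0. pose proof (HQs.(dw_ratio_pos) 0 dw_size_pos) as Hs0pos.
  apply Rle_trans with (sum0 n (fun k => 2 * s 0%nat * (INR k * (/2) ^ k))).
  - apply sum0_le. intros [|k] Hk; [simpl; lra|].
    assert (HQk : Q (S k) <= 2 * s 0%nat * (/2) ^ S k).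
    { pose proof (dw_le_pow_ratio0 (S k) Hk). pose proof (dw_le_1 0 dw_size_pos).
      assert (s 0%nat ^ k <= (/2) ^ k) by (apply pow_incr; lra).
      assert (0 <= s 0%nat ^ k) by (apply pow_le; lra).
      assert (0 <= s 0%nat * s 0%nat ^ k) by (apply Rmult_le_pos; lra).
      assert (Q 0%nat * (s 0%nat * s 0%nat ^ k) <= s 0%nat * s 0%nat ^ k) by nra.
      assert (s 0%nat * s 0%nat ^ k <= s 0%nat * (/2) ^ k) by nra.
      simpl pow in *. lra. }
    pose proof (pos_INR (S k)). nra.
  - rewrite sum0_scal. pose proof (sum0_k_half_pow_le n). nra.
Qed.

Lemma dw_ratio0_ge c1 : 0 < c1 <= mean n Q -> Rmin (/2) (c1 / 4) <= s 0%nat.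
Proof.
  intros Hc1. destruct (Rle_lt_dec (s 0%nat) (/2)) as [Hs0|Hs0].
  - pose proof dw_mean_le_ratio0 Hs0. apply Rle_trans with (c1 / 4); [apply Rmin_r | lra].
  - apply Rle_trans with (/2); [apply Rmin_l | lra].
Qed.

(* If [s 0] is large, the weights grow by a factor [>= 4 m] along the first [p = min m (n - 1)]
   indices, so the mass below [p] is at most [1 / (2 m)]; Markov then makes the mean at least
   [p - 1/2], contradicting [mean <= c2] when [p = m] and [mean <= n - 2] when [p = n - 1]. *)
Lemma dw_ratio0_le c2 m : 2 * c2 < INR m -> mean n Q <= c2 -> mean n Q <= INR n - 2 ->
  s 0%nat <= 4 * INR m * 4 ^ m.
Proof.
  intros Hm Hc2 Hn2. pose proof dw_mean_nonneg. pose proof dw_size_pos.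
  assert (Hm1 : 1 <= INR m) by (destruct m; [simpl in Hm; lra | apply (le_INR 1); lia]).
  destruct (Rle_lt_dec (s 0%nat) (4 * INR m * 4 ^ m)) as [|Hbig]; [assumption | exfalso].
  set (p := Nat.min m (n - 1)).
  assert (Hgrow : forall k, (k < p)%nat -> 4 * INR m * Q k <= Q (S k)).
  { intros k Hk. rewrite HQs.(dw_succ) by lia.
    pose proof (dw_ratio0_le_quarter_pow k ltac:(lia)).
    assert (4 ^ k <= 4 ^ m) by (apply Rle_pow; [lra | lia]).
    assert (0 < 4 ^ k) by (apply pow_lt; lra).
    assert (4 * INR m <= s k) by nra.
    pose proof (HQs.(dw_pos) k). nra. }
  assert (Hfront : sum0 p Q <= 2 * Q p / (4 * INR m))
    by (apply sum0_le_of_growth; [lra | exact dw_nonneg | exact Hgrow]).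
  assert (Hfront' : INR m * sum0 p Q <= /2).
  { pose proof (dw_le_1 p ltac:(lia)). unfold Rdiv in Hfront.
    apply Rmult_le_compat_l with (r := INR m) in Hfront; [|lra].
    replace (INR m * (2 * Q p * / (4 * INR m))) with (Q p / 2) in Hfront by (field; lra).
    lra. }
  pose proof (markov_sum0 p n Q ltac:(lia) dw_nonneg) as Hmarkov. rewrite HQs.(dw_sum) in Hmarkov.
  assert (INR p <= INR m) by (apply le_INR; lia).
  pose proof (sum0_nonneg p Q dw_nonneg).
  assert (Hmean : INR p - /2 <= mean n Q) by nra.
  destruct (Nat.le_ge_cases m (n - 1)) as [Hmn|Hmn].
  - replace p with m in Hmean by lia. lra.
  - replace p with (n - 1)%nat in Hmean by lia. rewrite minus_INR in Hmean by lia.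
    simpl INR in Hmean. lra.
Qed.

(* Markov puts mass [>= 1/2] on the first [min m n] indices, where [Q k <= Q 0 * U ^ m]. *)
Lemma dw_weight0_ge c2 m U : 2 * c2 < INR m -> mean n Q <= c2 -> 1 <= U -> s 0%nat <= U ->
  / (2 * INR m * U ^ m) <= Q 0%nat.
Proof.
  intros Hm Hc2 HU Hs0. pose proof dw_mean_nonneg. pose proof dw_size_pos.
  set (p := Nat.min m n).
  assert (Hhalf : /2 <= sum0 p Q).
  { destruct (Nat.le_ge_cases m n) as [Hmn|Hmn].
    - replace p with m by lia.
      pose proof (markov_sum0 m n Q Hmn dw_nonneg). rewrite HQs.(dw_sum) in *. nra.
    - replace p with n by lia. rewrite HQs.(dw_sum). lra. }
  assert (Hbound : sum0 p Q <= INR m * (Q 0%nat * U ^ m)).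
  { apply Rle_trans with (sum0 p (fun _ => Q 0%nat * U ^ m)).
    - apply sum0_le. intros k Hk.
      pose proof (dw_le_pow_ratio0 k ltac:(lia)). pose proof (HQs.(dw_ratio_pos) 0 dw_size_pos).
      assert (s 0%nat ^ k <= U ^ k) by (apply pow_incr; lra).
      assert (U ^ k <= U ^ m) by (apply Rle_pow; [lra | lia]).
      pose proof (HQs.(dw_pos) 0). nra.
    - rewrite sum0_const. apply Rmult_le_compat_r.
      + pose proof (HQs.(dw_pos) 0). assert (0 < U ^ m) by (apply pow_lt; lra). nra.
      + apply le_INR. lia. }
  assert (0 < INR m * U ^ m) by (apply Rmult_lt_0_compat; [lra | apply pow_lt; lra]).
  rewrite Rinv_mult, Rinv_mult. apply Rmult_le_reg_r with (2 * INR m * U ^ m); [lra|].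
  field_simplify; nra.
Qed.

End decaying_weights.

Lemma d_pos i : 0 < d i.
Proof.
  unfold d. apply lt_0_INR. pose proof (lt_O_fact i).
  pose proof (Nat.pow_nonzero 2 (i * (i - 1) / 2) ltac:(lia)). nia.
Qed.

Lemma d_succ i : d (S i) = d i * 2 ^ i * INR (S i).
Proof.
  unfold d.
  replace (S i * (S i - 1))%nat with (i * (i - 1) + i * 2)%nat by (destruct i; simpl; nia).
  rewrite Nat.div_add, Nat.pow_add_r by lia. change (fact (S i)) with (S i * fact i)%nat.
  rewrite !mult_INR, !pow_INR. simpl (INR 2). replace (1 + 1) with 2 by ring. ring.
Qed.

Lemma ln_d_succ i : ln (d (S i)) = ln (d i) + INR i * ln 2 + ln (INR (S i)).
Proof.
  rewrite d_succ. pose proof (d_pos i). pose proof (lt_0_INR (S i) ltac:(lia)).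
  assert (0 < 2 ^ i) by (apply pow_lt; lra).
  rewrite !ln_mult, ln_pow by (try apply Rmult_lt_0_compat; lra). ring.
Qed.

Definition defect (x y : R) (i : nat) : R := x + INR i * y - ln (d i).

Section weights.

Variables (t : nat) (x y : R).

(* [weight k] is the summand of index [i = t - k] in [is_xy], and
   [ratio k = weight (S k) / weight k]. *)
Definition weight (k : nat) : R := exp (x + INR (t - k) * y) / d (t - k).

Definition ratio (k : nat) : R := 2 ^ (t - 1 - k) * INR (t - k) / exp y.

Lemma weight_pos k : 0 < weight k.
Proof. apply Rdiv_lt_0_compat; [apply exp_pos | apply d_pos]. Qed.

Lemma ratio_pos k : (k < t)%nat -> 0 < ratio k.
Proof.
  intros Hk. unfold ratio. pose proof (exp_pos y). pose proof (lt_0_INR (t - k) ltac:(lia)).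
  assert (0 < 2 ^ (t - 1 - k)) by (apply pow_lt; lra).
  apply Rdiv_lt_0_compat; [nra | lra].
Qed.

Lemma weight_succ k : (S k < t)%nat -> weight (S k) = weight k * ratio k.
Proof.
  intros Hk. unfold weight, ratio.
  replace (t - k)%nat with (S (t - S k)) by lia. replace (t - 1 - k)%nat with (t - S k)%nat by lia.
  set (j := (t - S k)%nat). rewrite d_succ, S_INR.
  replace (x + (INR j + 1) * y) with (x + INR j * y + y) by ring.
  rewrite (exp_plus (x + INR j * y) y).
  pose proof (d_pos j). pose proof (exp_pos y). pose proof (pos_INR j).
  assert (0 < 2 ^ j) by (apply pow_lt; lra).
  field. repeat split; lra.
Qed.

Lemma ratio_succ k : (S k < t)%nat ->
  ratio (S k) = ratio k * (INR (t - S k) / (2 * INR (S (t - S k)))).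
Proof.
  intros Hk. unfold ratio.
  replace (t - k)%nat with (S (t - S k)) by lia.
  replace (t - 1 - k)%nat with (S (t - 1 - S k)) by lia.
  pose proof (exp_pos y). pose proof (lt_0_INR (S (t - S k)) ltac:(lia)).
  simpl pow. field. lra.
Qed.

Lemma ratio_decay_hi k : (S k < t)%nat -> ratio (S k) <= ratio k / 2.
Proof.
  intros Hk. rewrite ratio_succ by assumption. pose proof (ratio_pos k ltac:(lia)).
  rewrite S_INR. pose proof (pos_INR (t - S k)).
  assert (INR (t - S k) / (2 * (INR (t - S k) + 1)) <= / 2)
    by (apply Rmult_le_reg_r with (2 * (INR (t - S k) + 1)); [lra | field_simplify; lra]).
  unfold Rdiv in *. nra.
Qed.

Lemma ratio_decay_lo k : (S k < t)%nat -> ratio k / 4 <= ratio (S k).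
Proof.
  intros Hk. rewrite ratio_succ by assumption. pose proof (ratio_pos k ltac:(lia)).
  rewrite S_INR. assert (1 <= INR (t - S k)) by (apply (le_INR 1); lia).
  assert (/ 4 <= INR (t - S k) / (2 * (INR (t - S k) + 1)))
    by (apply Rmult_le_reg_r with (2 * (INR (t - S k) + 1)); [lra | field_simplify; lra]).
  unfold Rdiv in *. nra.
Qed.

Lemma is_xy_weights rho : is_xy t rho x y ->
  decaying_weights t weight ratio /\ mean t weight = INR t - rho.
Proof.
  intros [Hsum Hmean]. rewrite sum1_rev in Hsum, Hmean.
  assert (Hsum' : sum0 t weight = 1) by (rewrite <- Hsum; reflexivity).
  split; [split; auto using weight_pos, weight_succ, ratio_pos, ratio_decay_hi, ratio_decay_lo|].
  rewrite <- Hmean. replace (INR t) with (INR t * sum0 t weight) by (rewrite Hsum'; ring).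
  unfold mean. rewrite <- sum0_scal, <- sum0_minus. apply sum0_ext. intros k Hk.
  unfold weight. rewrite minus_INR by lia. replace (t - (t - k))%nat with k by lia.
  unfold Rdiv. ring.
Qed.

Lemma defect_top : defect x y t = ln (weight 0).
Proof.
  unfold defect, weight. rewrite Nat.sub_0_r. unfold Rdiv.
  pose proof (d_pos t).
  rewrite ln_mult, ln_Rinv, ln_exp by (try apply Rinv_0_lt_compat; try apply exp_pos; lra).
  ring.
Qed.

Lemma defect_succ j : (0 < t)%nat -> defect x y (S j) - defect x y j =
  (INR t - 1 - INR j) * ln 2 + (ln (INR t) - ln (INR (S j))) - ln (ratio 0).
Proof.
  intros Ht. unfold defect, ratio. rewrite ln_d_succ, !Nat.sub_0_r.
  pose proof (exp_pos y). pose proof (lt_0_INR t Ht).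
  assert (0 < 2 ^ (t - 1)) by (apply pow_lt; lra).
  unfold Rdiv. rewrite !ln_mult, ln_Rinv, ln_exp, ln_pow, minus_INR
    by (try apply Rmult_lt_0_compat; try apply Rinv_0_lt_compat; lra || lia).
  rewrite S_INR. simpl (INR 1). ring.
Qed.

Lemma defect_step_le j C : (0 < t)%nat -> Rabs (INR j - INR t) <= C ->
  Rabs (defect x y (S j) - defect x y j) <= Rabs (ln (ratio 0)) + 2 * (C + 1).
Proof.
  intros Ht Hj. apply Rabs_le_inv in Hj. rewrite defect_succ by assumption.
  assert (H1 : Rabs ((INR t - 1 - INR j) * ln 2) <= C + 1).
  { pose proof ln_lt_2. pose proof ln_2_lt_1.
    rewrite Rabs_mult, (Rabs_right (ln 2)) by lra.
    assert (Rabs (INR t - 1 - INR j) <= C + 1) by (apply Rabs_le; lra).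
    assert (Rabs (INR t - 1 - INR j) * ln 2 <= Rabs (INR t - 1 - INR j) * 1)
      by (apply Rmult_le_compat_l; [apply Rabs_pos | lra]).
    lra. }
  assert (H2 : Rabs (ln (INR t) - ln (INR (S j))) <= C + 1).
  { eapply Rle_trans; [apply Rabs_ln_sub_le; apply (le_INR 1); lia|].
    rewrite S_INR. apply Rabs_le. lra. }
  set (u := (INR t - 1 - INR j) * ln 2) in *. set (v := ln (INR t) - ln (INR (S j))) in *.
  pose proof (Rabs_triang u v). pose proof (Rabs_triang (u + v) (- ln (ratio 0))).
  rewrite Rabs_Ropp in *. unfold Rminus at 1. lra.
Qed.

Lemma defect_le a C : (0 < t)%nat -> Rabs (INR a - INR t) <= C ->
  Rabs (defect x y a) <= Rabs (ln (weight 0)) + C * (Rabs (ln (ratio 0)) + 2 * (C + 1)).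
Proof.
  intros Ht Ha. apply Rabs_le_inv in Ha as Ha'.
  set (B := Rabs (ln (ratio 0)) + 2 * (C + 1)).
  assert (Hchain : Rabs (defect x y a - defect x y t) <= C * B).
  { assert (HB : 0 <= B) by (pose proof (Rabs_pos (ln (ratio 0))); unfold B; lra).
    destruct (Nat.le_ge_cases t a) as [Hta|Hat].
    - eapply Rle_trans; [apply (Rabs_sub_le_steps _ B t a Hta)|].
      + intros j Hj. apply defect_step_le; [assumption|].
        assert (INR t <= INR j <= INR a) by (split; apply le_INR; lia).
        apply Rabs_le. lra.
      + rewrite minus_INR by assumption. apply Rmult_le_compat_r; lra.
    - rewrite Rabs_minus_sym.
      eapply Rle_trans; [apply (Rabs_sub_le_steps _ B a t Hat)|].
      + intros j Hj. apply defect_step_le; [assumption|].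
        assert (INR a <= INR j <= INR t) by (split; apply le_INR; lia).
        apply Rabs_le. lra.
      + rewrite minus_INR by assumption. apply Rmult_le_compat_r; lra. }
  rewrite <- defect_top.
  pose proof (Rabs_triang (defect x y a - defect x y t) (defect x y t)).
  replace (defect x y a - defect x y t + defect x y t) with (defect x y a) in * by ring.
  lra.
Qed.

End weights.

Theorem lemma37 :
  forall c1 c2 C : R, 0 < c1 -> c1 <= c2 -> 0 <= C ->
  exists K : R,
    forall (t : nat) (rho : R) (a : nat) (x y : R),
      (0 < t)%nat -> 1 < rho < INR t -> 2 <= rho ->
      c1 <= INR t - rho <= c2 ->
      (0 < a)%nat -> Rabs (INR a - INR t) <= C ->
      is_xy t rho x y ->
      Rabs (x + INR a * y - ln (d a)) <= K.
Proof.
  intros c1 c2 C Hc1 Hc12 HC.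
  destruct (INR_unbounded (2 * c2)) as [m Hm].
  assert (Hm1 : 1 <= INR m) by (destruct m; [simpl in Hm; lra | apply (le_INR 1); lia]).
  set (L := Rmin (/2) (c1 / 4)). set (U := 4 * INR m * 4 ^ m).
  assert (HU : 1 <= U) by (unfold U; pose proof (pow_R1_Rle 4 m ltac:(lra)); nra).
  set (L' := / (2 * INR m * U ^ m)).
  exists (Rabs (ln L') + C * (Rabs (ln L) + Rabs (ln U) + 2 * (C + 1))).
  intros t rho a x y Ht _ Hrho2 Hmean _ Hat Hxy.
  destruct (is_xy_weights t x y rho Hxy) as [Hdw Hmean_eq]. rewrite <- Hmean_eq in Hmean.
  assert (Hr0 : L <= ratio t y 0 <= U).
  { split; [apply (dw_ratio0_ge Hdw) | apply (dw_ratio0_le Hdw c2)]; lra. }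
  assert (Hw0 : L' <= weight t x y 0 <= 1).
  { split; [apply (dw_weight0_ge Hdw c2) | apply (dw_le_1 Hdw)]; lra || assumption. }
  assert (HL : 0 < L) by (apply Rmin_pos; lra).
  assert (HL' : 0 < L') by (apply Rinv_0_lt_compat, Rmult_lt_0_compat, pow_lt; lra).
  change (x + INR a * y - ln (d a)) with (defect x y a).
  eapply Rle_trans; [apply defect_le; eassumption|].
  pose proof (Rabs_ln_between L U (ratio t y 0) HL Hr0).
  pose proof (Rabs_ln_between L' 1 (weight t x y 0) HL' Hw0). rewrite ln_1, Rabs_R0 in *.
  apply Rplus_le_compat; [lra | apply Rmult_le_compat_l; lra].
Qed.
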